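(* Let $m$ be any nonzero complex number. Then for every positive integer $n$, \begin{align*}&\sum_{k=1}^n\frac{(256m-27)k^3-3(128m+9)k^2+2(88m-3)k-24m}{km^k\binom{4k}k} =6-\frac{3(3n+1)(3n+2)}{m^n\binom{4n}n}, \\&\sum_{k=1}^n\frac{(256m-27)k^3-2(64m+27)k^2-(16m+33)k+8m-6}{(4k+1)m^k\binom{4k}k} =6-\frac{3(n+1)(3n+1)(3n+2)}{(4n+1)m^n\binom{4n}n}, \\&\sum_{k=1}^n\frac{(256m-27)k^3-384mk^2+(176m+3)k-24m}{k(3k-1)m^k\binom{4k}k} =3-\frac{3(3n+1)}{m^n\binom{4n}n}, \\&\sum_{k=1}^n\frac{(256m-27)k^3-3(128m-9)k^2+2(88m-3)k-24m}{k(3k-1)(3k-2)m^k\binom{4k}k} =3-\frac{3}{m^n\binom{4n}n}. \end{align*} Consequently, if $|m|>27/256$, then \begin{align*}\sum_{k=1}^\infty\frac{(256m-27)k^3-3(128m+9)k^2+2(88m-3)k-24m}{km^k\binom{4k}k}&=6, \\\sum_{k=1}^\infty\frac{(256m-27)k^3-2(64m+27)k^2-(16m+33)k+8m-6}{(4k+1)m^k\binom{4k}k}&=6, \\\sum_{k=1}^\infty\frac{(256m-27)k^3-384mk^2+(176m+3)k-24m}{k(3k-1)m^k\binom{4k}k}&=3, \\\sum_{k=1}^\infty\frac{(256m-27)k^3-3(128m-9)k^2+2(88m-3)k-24m}{k(3k-1)(3k-2)m^k\binom{4k}k}&=3. \end{align*} *)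

From Stdlib Require Import Reals.
From Coquelicot Require Import Coquelicot.
Open Scope C_scope.

Definition cn (k : nat) : C := RtoC (INR k).
Definition cbin4 (k : nat) : C := RtoC (Binomial.C (4 * k) k).

Definition t1 (m : C) (k : nat) : C :=
  ((256 * m - 27) * cn k ^ 3 - 3 * (128 * m + 9) * cn k ^ 2
     + 2 * (88 * m - 3) * cn k - 24 * m)
  / (cn k * m ^ k * cbin4 k).

Definition t2 (m : C) (k : nat) : C :=
  ((256 * m - 27) * cn k ^ 3 - 2 * (64 * m + 27) * cn k ^ 2
     - (16 * m + 33) * cn k + 8 * m - 6)
  / ((4 * cn k + 1) * m ^ k * cbin4 k).

Definition t3 (m : C) (k : nat) : C :=
  ((256 * m - 27) * cn k ^ 3 - 384 * m * cn k ^ 2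
     + (176 * m + 3) * cn k - 24 * m)
  / (cn k * (3 * cn k - 1) * m ^ k * cbin4 k).

Definition t4 (m : C) (k : nat) : C :=
  ((256 * m - 27) * cn k ^ 3 - 3 * (128 * m - 9) * cn k ^ 2
     + 2 * (88 * m - 3) * cn k - 24 * m)
  / (cn k * (3 * cn k - 1) * (3 * cn k - 2) * m ^ k * cbin4 k).

(* Each summand telescopes: t_i m (k+1) = r_i k - r_i (k+1), where r_i n is the
   subtracted term of the i-th closed form and r_i 0 is 6 or 3.  Clearing denominators
   with C(4k+4,k+1) / C(4k,k) = (4k+1)(4k+2)(4k+3)(4k+4) / ((k+1)(3k+1)(3k+2)(3k+3))
   reduces each identity to a polynomial one.  The ratio of consecutive terms of
   (n+1)^3 / (M^n C(4n,n)) tends to 27 / (256 M), so for M = |m| > 27/256 these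
   terms, which dominate |r_i n| / 27, tend to 0 and the series converge. *)

From Stdlib Require Import Reals Lra Lia.
From Coquelicot Require Import Coquelicot.

Lemma binom4_pos n : (0 < Binomial.C (4 * n) n)%R.
Proof.
  unfold Binomial.C. apply Rdiv_lt_0_compat; [apply INR_fact_lt_0|].
  apply Rmult_lt_0_compat; apply INR_fact_lt_0.
Qed.

Lemma binom4_succ n : Binomial.C (4 * S n) (S n) =
  (Binomial.C (4 * n) n * ((4 * INR n + 1) * (4 * INR n + 2) * (4 * INR n + 3) * (4 * INR n + 4))
   / ((INR n + 1) * (3 * INR n + 1) * (3 * INR n + 2) * (3 * INR n + 3)))%R.
Proof.
  unfold Binomial.C.
  replace (4 * S n - S n)%nat with (S (S (S (3 * n)))) by lia.
  replace (4 * n - n)%nat with (3 * n)%nat by lia.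
  replace (4 * S n)%nat with (S (S (S (S (4 * n))))) by lia.
  rewrite !fact_simpl, !mult_INR, !S_INR, !mult_INR. simpl (INR 4); simpl (INR 3).
  pose proof (INR_fact_neq_0 n); pose proof (INR_fact_neq_0 (3 * n));
  pose proof (INR_fact_neq_0 (4 * n)); pose proof (pos_INR n).
  field; repeat split; lra.
Qed.

Lemma is_lim_seq_affine_ratio a b c d : 0 < c -> 0 <= d ->
  is_lim_seq (fun n => (a * INR n + b) / (c * INR n + d)) (a / c).
Proof.
  intros hc hd.
  assert (hinv : is_lim_seq (fun n => / INR n) 0).
  { apply (is_lim_seq_inv INR p_infty); [exact is_lim_seq_INR | discriminate]. }
  assert (hperturb : forall e f, is_lim_seq (fun n => e + f * / INR n) e).
  { intros e f. apply is_lim_seq_scal_l with (a := f) in hinv. simpl in hinv.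
    pose proof (is_lim_seq_plus' _ _ _ _ (is_lim_seq_const e) hinv) as H.
    now rewrite Rmult_0_r, Rplus_0_r in H. }
  apply is_lim_seq_ext_loc with (fun n => (a + b * / INR n) / (c + d * / INR n)).
  - exists 1%nat. intros n hn. apply le_INR in hn. simpl in hn.
    field. split; [|lra]. nra.
  - apply is_lim_seq_div'; [apply hperturb | apply hperturb | lra].
Qed.

Definition cube_over_binom4 (M : R) (n : nat) : R :=
  (INR n + 1) ^ 3 / (M ^ n * Binomial.C (4 * n) n).

Lemma cube_over_binom4_vanishes M : 27 / 256 < M -> is_lim_seq (cube_over_binom4 M) 0.
Proof.
  intro hM.
  assert (hpos : forall n, 0 < cube_over_binom4 M n).
  { intro n. pose proof (pos_INR n). pose proof (binom4_pos n).
    apply Rdiv_lt_0_compat; [apply pow_lt; lra | apply Rmult_lt_0_compat; [apply pow_lt|]; lra]. }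
  assert (hratio : forall n, Rabs (cube_over_binom4 M (S n) / cube_over_binom4 M n)
    = (1 * INR n + 2) / (1 * INR n + 1) * ((1 * INR n + 2) / (1 * INR n + 1))
      * ((1 * INR n + 2) / (4 * INR n + 4)) * ((3 * INR n + 1) / (4 * INR n + 1))
      * ((3 * INR n + 2) / (4 * INR n + 2)) * ((3 * INR n + 3) / (4 * INR n + 3)) * / M).
  { intro n. pose proof (hpos n). pose proof (hpos (S n)).
    rewrite Rabs_pos_eq by (apply Rlt_le, Rdiv_lt_0_compat; lra).
    unfold cube_over_binom4. rewrite binom4_succ, S_INR. simpl pow.
    pose proof (pos_INR n). pose proof (binom4_pos n). assert (0 < M ^ n) by (apply pow_lt; lra).
    field. repeat split; lra. }
  assert (hseries : ex_series (fun n => Rabs (cube_over_binom4 M n))).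
  { apply ex_series_DAlembert with (27 / 256 / M).
    - apply Rmult_lt_reg_r with M; [lra|]. field_simplify; lra.
    - intro n. specialize (hpos n). lra.
    - apply (is_lim_seq_ext _ _ _ (fun n => eq_sym (hratio n))).
      replace (27 / 256 / M) with (1 / 1 * (1 / 1) * (1 / 4) * (3 / 4) * (3 / 4) * (3 / 4) * / M)
        by (field; lra).
      apply is_lim_seq_mult'; [|apply is_lim_seq_const].
      do 5 (apply is_lim_seq_mult'; [|apply is_lim_seq_affine_ratio; lra]).
      apply is_lim_seq_affine_ratio; lra. }
  apply (is_lim_seq_ext (fun n => Rabs (cube_over_binom4 M n))).
  - intro n. apply Rabs_pos_eq, Rlt_le, hpos.
  - now apply ex_series_lim_0.
Qed.

Open Scope C_scope.

Lemma cn_0 : cn 0 = 0.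
Proof. reflexivity. Qed.

Lemma cn_succ n : cn (S n) = cn n + 1.
Proof. unfold cn. rewrite S_INR, RtoC_plus. reflexivity. Qed.

Lemma cbin4_0 : cbin4 0 = 1.
Proof. unfold cbin4, Binomial.C. simpl. f_equal. field. Qed.

Lemma cbin4_neq0 n : cbin4 n <> 0.
Proof. intro E. apply RtoC_inj in E. pose proof (binom4_pos n). lra. Qed.

Lemma cbin4_succ n : cbin4 (S n) = cbin4 n
  * ((4 * cn n + 1) * (4 * cn n + 2) * (4 * cn n + 3) * (4 * cn n + 4))
  / ((cn n + 1) * (3 * cn n + 1) * (3 * cn n + 2) * (3 * cn n + 3)).
Proof.
  pose proof (pos_INR n).
  unfold cbin4, cn. rewrite binom4_succ, RtoC_div, !RtoC_mult, !RtoC_plus, !RtoC_mult; [reflexivity|].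
  apply Rgt_not_eq; repeat apply Rmult_lt_0_compat; lra.
Qed.

Lemma Cmod_quotient_binom4_vanishes (m : C) (p d : nat -> R) :
  (27 / 256 < Cmod m)%R ->
  (forall n, 0 <= p n <= 27 * (INR n + 1) ^ 3)%R -> (forall n, 1 <= d n)%R ->
  is_lim_seq (fun n => Cmod (RtoC (p n) / (RtoC (d n) * m ^ n * cbin4 n))) 0.
Proof.
  intros hM hp hd.
  apply is_lim_seq_le_le with (fun _ => 0%R) (fun n => 27 * cube_over_binom4 (Cmod m) n)%R.
  - intro n. split; [apply Cmod_ge_0|].
    assert (hmn : (0 < Cmod m ^ n)%R) by (apply pow_lt; lra).
    pose proof (binom4_pos n). specialize (hp n). specialize (hd n).
    assert (hK : (0 < Cmod m ^ n * Binomial.C (4 * n) n)%R) by now apply Rmult_lt_0_compat.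
    assert (hden : RtoC (d n) * m ^ n * cbin4 n <> 0).
    { apply Cmod_gt_0. unfold cbin4.
      rewrite !Cmod_mult, Cmod_pow, !Cmod_R, !Rabs_pos_eq by lra. nra. }
    rewrite Cmod_div by exact hden. unfold cbin4, cube_over_binom4.
    rewrite !Cmod_mult, Cmod_pow, !Cmod_R, !Rabs_pos_eq by lra.
    apply Rle_trans with (p n / (Cmod m ^ n * Binomial.C (4 * n) n))%R.
    + apply Rmult_le_compat_l; [lra|]. apply Rinv_le_contravar; [exact hK | nra].
    + unfold Rdiv. rewrite <- Rmult_assoc.
      apply Rmult_le_compat_r; [apply Rlt_le, Rinv_0_lt_compat, hK | lra].
  - apply is_lim_seq_const.
  - pose proof (is_lim_seq_scal_l _ 27 _ (cube_over_binom4_vanishes _ hM)) as H.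
    simpl in H. now rewrite Rmult_0_r in H.
Qed.

Definition is_remainder (u : nat -> C) (l : C) (r : nat -> C) : Prop :=
  r 0%nat = l /\ forall k, u (S k) = r k - r (S k).

Lemma sum_n_m_remainder u l r n :
  is_remainder u l r -> sum_n_m u 1 n = l - r n.
Proof.
  intros [r0 step]. induction n as [|n IH].
  - rewrite sum_n_m_zero, r0 by lia. change ((0 : C) = l - l). ring.
  - rewrite sum_n_Sm, IH, step by lia. change (l - r n + (r n - r (S n)) = l - r (S n)). ring.
Qed.

Lemma is_series_remainder u l r :
  is_remainder u l r -> is_lim_seq (fun n => Cmod (r n)) 0 ->
  is_series (fun k => u (S k)) l.
Proof.
  intros hr hlim. apply filterlim_locally. intro eps.
  apply is_lim_seq_spec in hlim. destruct (hlim eps) as [N HN]. exists N. intros n hn.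
  apply norm_compat1. unfold sum_n. rewrite sum_n_m_S, (sum_n_m_remainder _ _ _ _ hr).
  change (Cmod (l - r (S n) - l) < eps)%R.
  replace (l - r (S n) - l) with (- r (S n)) by ring. rewrite Cmod_opp.
  specialize (HN (S n) ltac:(lia)). rewrite Rminus_0_r, Rabs_pos_eq in HN by apply Cmod_ge_0.
  exact HN.
Qed.

Ltac cn_affine_neq0 :=
  unfold cn; let E := fresh in intro E; apply (f_equal Re) in E; simpl in E;
  match type of E with context [INR ?k] => pose proof (pos_INR k) end; lra.

Section Remainders.

Variable m : C.

Definition rem1 (n : nat) : C :=
  3 * (3 * cn n + 1) * (3 * cn n + 2) / (m ^ n * cbin4 n).
Definition rem2 (n : nat) : C :=
  3 * (cn n + 1) * (3 * cn n + 1) * (3 * cn n + 2) / ((4 * cn n + 1) * m ^ n * cbin4 n).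
Definition rem3 (n : nat) : C := 3 * (3 * cn n + 1) / (m ^ n * cbin4 n).
Definition rem4 (n : nat) : C := 3 / (m ^ n * cbin4 n).

Hypothesis hm : m <> 0.

Ltac remainder_identity :=
  split;
  [ rewrite ?cn_0, cbin4_0; simpl Cpow; field
  | let k := fresh "k" in intro k; rewrite cn_succ, cbin4_succ; simpl Cpow;
    pose proof (Cpow_nz m k hm); pose proof (cbin4_neq0 k);
    field; repeat split; first [assumption | cn_affine_neq0] ].

Lemma t1_remainder : is_remainder (t1 m) 6 rem1.
Proof. unfold t1, rem1. remainder_identity. Qed.
Lemma t2_remainder : is_remainder (t2 m) 6 rem2.
Proof. unfold t2, rem2. remainder_identity. Qed.
Lemma t3_remainder : is_remainder (t3 m) 3 rem3.
Proof. unfold t3, rem3. remainder_identity. Qed.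
Lemma t4_remainder : is_remainder (t4 m) 3 rem4.
Proof. unfold t4, rem4. remainder_identity. Qed.

Hypothesis hM : (27 / 256 < Cmod m)%R.

Lemma rem1_vanishes : is_lim_seq (fun n => Cmod (rem1 n)) 0.
Proof.
  apply (is_lim_seq_ext (fun n => Cmod (RtoC (3 * (3 * INR n + 1) * (3 * INR n + 2))
                                        / (RtoC 1 * m ^ n * cbin4 n)))).
  { intro n. unfold rem1, cn. now rewrite !RtoC_mult, !RtoC_plus, !RtoC_mult, Cmult_1_l. }
  apply Cmod_quotient_binom4_vanishes; [exact hM | | intro; lra].
  intro n. pose proof (pos_INR n). split; nra.
Qed.

Lemma rem2_vanishes : is_lim_seq (fun n => Cmod (rem2 n)) 0.
Proof.
  apply (is_lim_seq_ext (fun n => Cmod (RtoC (3 * (INR n + 1) * (3 * INR n + 1) * (3 * INR n + 2))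
                                        / (RtoC (4 * INR n + 1) * m ^ n * cbin4 n)))).
  { intro n. unfold rem2, cn. now rewrite !RtoC_mult, !RtoC_plus, !RtoC_mult. }
  apply Cmod_quotient_binom4_vanishes; [exact hM | | intro n; pose proof (pos_INR n); lra].
  intro n. pose proof (pos_INR n). split; nra.
Qed.

Lemma rem3_vanishes : is_lim_seq (fun n => Cmod (rem3 n)) 0.
Proof.
  apply (is_lim_seq_ext (fun n => Cmod (RtoC (3 * (3 * INR n + 1)) / (RtoC 1 * m ^ n * cbin4 n)))).
  { intro n. unfold rem3, cn. now rewrite !RtoC_mult, !RtoC_plus, !RtoC_mult, Cmult_1_l. }
  apply Cmod_quotient_binom4_vanishes; [exact hM | | intro; lra].
  intro n. pose proof (pos_INR n). split; nra.
Qed.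

Lemma rem4_vanishes : is_lim_seq (fun n => Cmod (rem4 n)) 0.
Proof.
  apply (is_lim_seq_ext (fun n => Cmod (RtoC 3 / (RtoC 1 * m ^ n * cbin4 n)))).
  { intro n. unfold rem4. now rewrite Cmult_1_l. }
  apply Cmod_quotient_binom4_vanishes; [exact hM | | intro; lra].
  intro n. pose proof (pos_INR n). split; nra.
Qed.

End Remainders.

Theorem lemma2p1 (m : C) (hm : m <> 0) :
  (forall n : nat, (1 <= n)%nat ->
     sum_n_m (t1 m) 1 n
       = 6 - 3 * (3 * cn n + 1) * (3 * cn n + 2) / (m ^ n * cbin4 n)
     /\ sum_n_m (t2 m) 1 n
       = 6 - 3 * (cn n + 1) * (3 * cn n + 1) * (3 * cn n + 2)
               / ((4 * cn n + 1) * m ^ n * cbin4 n)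
     /\ sum_n_m (t3 m) 1 n = 3 - 3 * (3 * cn n + 1) / (m ^ n * cbin4 n)
     /\ sum_n_m (t4 m) 1 n = 3 - 3 / (m ^ n * cbin4 n))
  /\
  ((Cmod m > 27 / 256)%R ->
     is_series (fun k => t1 m (S k)) (RtoC 6)
     /\ is_series (fun k => t2 m (S k)) (RtoC 6)
     /\ is_series (fun k => t3 m (S k)) (RtoC 3)
     /\ is_series (fun k => t4 m (S k)) (RtoC 3)).
Proof.
  split.
  - intros n _.
    rewrite (sum_n_m_remainder _ _ _ n (t1_remainder m hm)),
      (sum_n_m_remainder _ _ _ n (t2_remainder m hm)),
      (sum_n_m_remainder _ _ _ n (t3_remainder m hm)),
      (sum_n_m_remainder _ _ _ n (t4_remainder m hm)).
    now repeat split.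
  - intro hM. repeat split.
    + exact (is_series_remainder _ _ _ (t1_remainder m hm) (rem1_vanishes m hM)).
    + exact (is_series_remainder _ _ _ (t2_remainder m hm) (rem2_vanishes m hM)).
    + exact (is_series_remainder _ _ _ (t3_remainder m hm) (rem3_vanishes m hM)).
    + exact (is_series_remainder _ _ _ (t4_remainder m hm) (rem4_vanishes m hM)).
Qed.
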